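(* Let $G$ be a connected graph with $N$ vertices and maximum degree $\Delta$, let $k,R$ be positive integers with $N>2k(\Delta^{4R}+1)$, and let $H$ be a $k$-local operator (not necessarily Hermitian) of range at most $R$ on the qubits at the vertices of $G$. If $H|W^p\rangle=E_p|W^p\rangle$ with $E_p\in\mathbb{C}$ for all $p\in\{0,1,\dots,N\}$, then there exist constants $\Omega,\omega\in\mathbb{C}$ with $E_p=\Omega+\omega p$ for all $p\in\{0,1,\dots,N\}$.
   Context: System of $N$ qubits on the vertices of a graph $G$ with local basis $|0\rangle,|1\rangle$. For each vertex $i$, $s_i^\dagger$ acts on $i$ as $s^\dagger|0\rangle=|1\rangle$, $s^\dagger|1\rangle=0$, $s_i=(s_i^\dagger)^\dagger$; $|\overline 0\rangle=|0\rangle^{\otimes N}$. Distances are graph distances. Every operator has a unique expansion in normal-ordered strings $s^\dagger_{j_1}\cdots s^\dagger_{j_n}s_{k_1}\cdots s_{k_m}$ (the $j$'s pairwise distinct, the $k$'s pairwise distinct, overlaps allowed), whose sites are $\{j_1,\dots,j_n,k_1,\dots,k_m\}$. A string has range $R$, where $R$ is the smallest positive integer with all pairwise distances between its sites $<R$; an operator has range at most $R$ if every string with nonzero coefficient has range at most $R$, and is $k$-local if every such string involves at most $k$ distinct sites. $S^\dagger=\sum_i s_i^\dagger$ and $|W^p\rangle$ is the normalization of $(S^\dagger)^p|\overline 0\rangle$ for $p=0,\dots,N$. *)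

From HB Require Import structures.
From mathcomp Require Import all_boot all_order all_algebra fingraph.
From mathcomp Require Import reals complex.
Set Implicit Arguments. Unset Strict Implicit. Unset Printing Implicit Defensive.
Import Order.TTheory GRing.Theory Num.Theory.
Local Open Scope ring_scope.

Section Defs.
Variable V : finType.

Definition simple_graph (e : rel V) := symmetric e /\ irreflexive e.
Definition connected_graph (e : rel V) := forall i j : V, connect e i j.
Definition max_degree (e : rel V) : nat := \max_(i : V) #|[set j | e i j]|.

Definition walk_of_length (e : rel V) (n : nat) (i j : V) : bool :=
  [exists p : n.-tuple V, path e i p && (last i p == j)].

(* graph distance: the least n with a walk of length n from i to j
   (defaults to #|V| if none, which cannot happen in a connected graph) *)
Definition gdist (e : rel V) (i j : V) : nat :=
  find (fun n => walk_of_length e n i j) (iota 0 #|V|).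

(* the smallest positive integer R with all pairwise distances of the sites < R *)
Definition str_range (e : rel V) (S : {set V}) : nat :=
  (\max_(i in S) \max_(j in S) gdist e i j).+1.

Variable C : nzRingType.

(* basis |x>, x : {set V} the set of sites in state |1> *)
Definition state := {set V} -> C.

Definition ket0 : state := fun x => if x == set0 then 1 else 0.

Definition sdag (i : V) (v : state) : state :=
  fun x => if i \in x then v (x :\ i) else 0.
Definition sann (i : V) (v : state) : state :=
  fun x => if i \in x then 0 else v (i |: x).

(* normal-ordered string s^dag_{j1}...s^dag_{jn} s_{k1}...s_{km}
   with {j..} = J, {k..} = K *)
Definition nstring (J K : {set V}) (v : state) : state :=
  foldr sdag (foldr sann v (enum K)) (enum J).

Definition Sdag (v : state) : state := fun x => \sum_(i : V) sdag i v x.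

Definition klocal_range (e : rel V) (k R : nat) (H : state -> state) : Prop :=
  exists c : {set V} -> {set V} -> C,
    (forall J K, c J K != 0 -> (#|J :|: K| <= k)%N /\ (str_range e (J :|: K) <= R)%N) /\
    (forall v x, H v x = \sum_(J : {set V}) \sum_(K : {set V}) c J K * nstring J K v x).

End Defs.

Definition Wstate (R : realType) (V : finType) (p : nat) : state V R[i] :=
  let v := iter p (@Sdag V R[i]) (@ket0 V R[i]) in
  fun x => (sqrtC (\sum_(y : {set V}) `|v y| ^+ 2))^-1 * v x.

(* Both |W^p> and the eigenvalue equation only see Hamming weights: |W^p> is a
   nonzero multiple of the indicator of the configurations of weight p.  Reading
   the equation H|W^p> = E_p|W^p> at a configuration x therefore gives
   f(x) = E_|x|, where f(x) sums the coefficients of the particle-conserving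
   strings that act nontrivially at x.  Since N is large compared with the size
   of balls of radius R, there are two sites a, b at distance at least R, and no
   string of H touches both.  Hence f is additive in a and b separately:
   f(z+a+b) + f(z) = f(z+a) + f(z+b) for every z avoiding a and b.  Taking
   |z| = p gives E_(p+2) + E_p = 2 E_(p+1), so E_p is affine in p. *)
From HB Require Import structures.
From mathcomp Require Import all_boot all_order all_algebra fingraph.
From mathcomp Require Import reals complex.
From mathcomp Require Import ring zify.
Import Order.TTheory GRing.Theory Num.Theory.
Set Implicit Arguments. Unset Strict Implicit. Unset Printing Implicit Defensive.
Local Open Scope ring_scope.

Lemma subset_of_card (T : finType) (A : {set T}) p : (p <= #|A|)%N ->
  exists2 z : {set T}, z \subset A & #|z| = p.
Proof.
move=> hp; exists [set t in take p (enum A)].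
  by apply/subsetP => t; rewrite inE => /mem_take; rewrite mem_enum.
rewrite cardsE (card_uniqP _); last by rewrite take_uniq ?enum_uniq.
by rewrite size_take -cardE; case: ltngtP hp => // ->.
Qed.

Section NormalOrderedStrings.
Variables (V : finType) (C : nzRingType).

Lemma foldr_sannE (s : seq V) (v : state V C) x : uniq s ->
  foldr (@sann V C) v s x =
  if [disjoint s & x] then v (x :|: [set t in s]) else 0.
Proof.
elim: s x => [|i s IH] x /=.
  by rewrite set_nil disjoint_has /= setU0.
move=> /andP[nis us]; rewrite /sann IH // disjoint_cons set_cons.
case: (boolP (i \in x)) => ix //=.
have -> : [disjoint s & i |: x] = [disjoint s & x].
  rewrite !disjoint_has; congr (~~ _); apply: eq_in_has => t ts /=.
  by rewrite !inE; case: (t =P i) => // ti; rewrite -ti ts in nis.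
by rewrite setUCA setUA.
Qed.

Lemma foldr_sdagE (s : seq V) (v : state V C) x : uniq s ->
  foldr (@sdag V C) v s x =
  if all [in x] s then v (x :\: [set t in s]) else 0.
Proof.
elim: s x => [|i s IH] x /=.
  by rewrite set_nil setD0.
move=> /andP[nis us]; rewrite /sdag IH // set_cons.
case: (boolP (i \in x)) => ix //=.
have -> : all [in x :\ i] s = all [in x] s.
  apply: eq_in_all => t ts /=.
  by rewrite !inE; case: (t =P i) => // ti; rewrite -ti ts in nis.
by rewrite setDDl setUC.
Qed.

Lemma nstringE J K (v : state V C) x :
  nstring J K v x = if (J \subset x) && [disjoint K & x :\: J]
                    then v ((x :\: J) :|: K) else 0.
Proof.
rewrite /nstring foldr_sdagE ?enum_uniq // set_enum.
have -> : all [in x] (enum J) = (J \subset x).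
  apply/allP/subsetP => sJx t; first by move=> tJ; apply: sJx; rewrite mem_enum.
  by rewrite mem_enum => /sJx.
case: (J \subset x) => //=.
by rewrite foldr_sannE ?enum_uniq // set_enum (eq_disjoint (mem_enum K)).
Qed.

Lemma iter_Sdag_ket0 p (y : {set V}) :
  iter p (@Sdag V C) (@ket0 V C) y = p`!%:R * (#|y| == p)%:R.
Proof.
elim: p y => [|p IH] y /=.
  by rewrite /ket0 cards_eq0 fact0 mul1r; case: (y == set0).
rewrite /Sdag; under eq_bigr => i _ do rewrite /sdag IH.
rewrite -big_mkcond /= (eq_bigr (fun _ => p`!%:R * (#|y| == p.+1)%:R)); last first.
  by move=> i iy; rewrite (cardsD1 i y) iy add1n eqSS.
rewrite sumr_const; case: (#|y| =P p.+1) => [->|_]; last by rewrite !mulr0 mul0rn.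
by rewrite !mulr1 factS natrM mulr_natl.
Qed.

End NormalOrderedStrings.

Lemma WstateE (R : realType) (V : finType) p : (p <= #|V|)%N ->
  exists2 w : R[i], w != 0 & forall x, @Wstate R V p x = w * (#|x| == p)%:R.
Proof.
move=> hp; set v := iter p (@Sdag V R[i]) (@ket0 V R[i]).
set g := (sqrtC (\sum_(y : {set V}) `|v y| ^+ 2))^-1.
exists (g * p`!%:R); last by move=> x; rewrite /Wstate -/v -/g /v iter_Sdag_ket0 mulrA.
have fact_neq0 : (p`!%:R : R[i]) != 0 by rewrite pnatr_eq0 -lt0n fact_gt0.
rewrite mulf_neq0 // invr_eq0 sqrtC_eq0 psumr_eq0 => [|y _]; last exact: exprn_ge0.
have [z _ hz] : exists2 z : {set V}, z \subset [set: V] & #|z| = p.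
  by apply: subset_of_card; rewrite cardsT.
apply/allPn; exists z; first by rewrite mem_index_enum.
by rewrite /= sqrf_eq0 normr_eq0 /v iter_Sdag_ket0 hz eqxx mulr1.
Qed.

(* The string s^dag_J s_K maps |(x \ J) u K> to |x>; on weight-|x| configurations
   it contributes at x exactly when this holds. *)
Definition conserving_at (V : finType) (J K x : {set V}) : bool :=
  [&& J \subset x, [disjoint K & x :\: J] & #|J| == #|K|].

Definition weight_response (V : finType) (C : nzRingType)
    (c : {set V} -> {set V} -> C) (x : {set V}) : C :=
  \sum_(J : {set V}) \sum_(K : {set V}) c J K * (conserving_at J K x)%:R.

Lemma card_setDU_eq (V : finType) (J K x : {set V}) :
  J \subset x -> [disjoint K & x :\: J] ->
  (#|(x :\: J) :|: K| == #|x|) = (#|J| == #|K|).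
Proof.
move=> sJx dK; have := cardsID J x; rewrite (setIidPr sJx) => cardx.
rewrite cardsU (disjoint_setI0 (_ : [disjoint x :\: J & K])); last by rewrite disjoint_sym.
by rewrite cards0 subn0 -cardx; apply/eqP/eqP; lia.
Qed.

Lemma weight_responseE (R : realType) (V : finType)
    (c : {set V} -> {set V} -> R[i]) (H : state V R[i] -> state V R[i])
    (E : nat -> R[i]) :
  (forall v x, H v x = \sum_(J : {set V}) \sum_(K : {set V}) c J K * nstring J K v x) ->
  (forall p : nat, (p <= #|V|)%N ->
     H (@Wstate R V p) = (fun x => E p * @Wstate R V p x)) ->
  forall x, weight_response c x = E #|x|.
Proof.
move=> HE eigH x; have hp : (#|x| <= #|V|)%N := max_card _.
have [w w_neq0 Ww] := WstateE R hp.
have := congr1 (fun f => f x) (eigH _ hp); rewrite /= HE Ww eqxx mulr1 => Hx.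
apply: (mulIf w_neq0); rewrite -Hx /weight_response mulr_suml; apply: eq_bigr => J _.
rewrite mulr_suml; apply: eq_bigr => K _; rewrite nstringE /conserving_at -mulrA.
congr (_ * _); case: (boolP (J \subset x)) => sJx /=; last by rewrite mul0r.
case: (boolP [disjoint K & x :\: J]) => dK /=; last by rewrite mul0r.
by rewrite Ww card_setDU_eq // mulrC.
Qed.

Lemma conserving_atU1 (V : finType) (J K x : {set V}) a : a \notin J :|: K ->
  conserving_at J K (a |: x) = conserving_at J K x.
Proof.
rewrite inE negb_or => /andP[aJ aK]; rewrite /conserving_at.
have -> : (J \subset a |: x) = (J \subset x).
  apply/subsetP/subsetP => sJx t tJ; last by rewrite inE sJx ?orbT.
  by have := sJx t tJ; rewrite !inE => /orP[/eqP ta|//]; rewrite -ta tJ in aJ.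
have -> // : [disjoint K & (a |: x) :\: J] = [disjoint K & x :\: J].
rewrite !disjoint_subset; apply/subsetP/subsetP => dK t tK.
  by have := dK t tK; rewrite !inE; apply: contra => /andP[-> ->]; rewrite orbT.
have := dK t tK; rewrite !inE; apply: contra => /andP[-> /orP[/eqP ta|//]].
by rewrite -ta tK in aK.
Qed.

Lemma weight_response_additive (V : finType) (C : nzRingType)
    (c : {set V} -> {set V} -> C) a b z :
  (forall J K, c J K != 0 -> ~~ ((a \in J :|: K) && (b \in J :|: K))) ->
  weight_response c (a |: (b |: z)) + weight_response c z =
  weight_response c (a |: z) + weight_response c (b |: z).
Proof.
move=> c_apart; rewrite /weight_response -!big_split /=; apply: eq_bigr => J _.
rewrite -!big_split /=; apply: eq_bigr => K _.
case: (c J K =P 0) => [->|/eqP /c_apart]; first by rewrite !mul0r !addr0.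
rewrite negb_and => /orP[aJK|bJK]; first by rewrite !(conserving_atU1 _ aJK) addrC.
by rewrite setUCA !(conserving_atU1 _ bJK).
Qed.

Lemma affine_of_second_difference (C : comNzRingType) (E : nat -> C) (N : nat) :
  (forall p, (p.+2 <= N)%N -> E p.+2 + E p = E p.+1 + E p.+1) ->
  forall p, (p <= N)%N -> E p = E 0%N + (E 1%N - E 0%N) * p%:R.
Proof.
move=> flat.
have step p : (p < N)%N -> E p.+1 - E p = E 1%N - E 0%N.
  elim: p => [//|p IH] hp; rewrite -IH ?(ltnW hp) //.
  by apply/eqP; rewrite subr_eq addrAC -flat // addrK.
elim=> [|p IH] hp; first by rewrite mulr0 addr0.
by rewrite -(subrK (E p) (E p.+1)) step // IH ?(ltnW hp) // -nat1r; ring.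
Qed.

Local Open Scope nat_scope.

Lemma sum_expn_lt (D m : nat) : 2 <= D -> \sum_(n < m) D ^ n < D ^ m.
Proof.
move=> D2; elim: m => [|m IH]; first by rewrite big_ord0 expn0.
rewrite big_ord_recr /= expnS; apply: leq_trans (_ : D ^ m + D ^ m <= _).
  by rewrite ltn_add2r.
by rewrite addnn -mul2n leq_mul2r D2 orbT.
Qed.

Section Walks.
Variables (V : finType) (e : rel V).

Fixpoint walk_ends (n : nat) (a : V) : {set V} :=
  if n is n'.+1 then \bigcup_(x | e a x) walk_ends n' x else [set a].

Lemma walk_ends_of_walk n a j : walk_of_length e n a j -> j \in walk_ends n a.
Proof.
elim: n a => [|n IH] a /existsP [[p sz] /andP[hp /eqP hl]].
  by move: sz hp hl; case: p => //= _ _ ->; rewrite inE.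
move: sz hp hl; case: p => [|x p] //= sz /andP[eax hp] hl.
apply/bigcupP; exists x => //; apply: IH; apply/existsP.
by exists (Tuple sz); rewrite /= hp hl eqxx.
Qed.

Lemma card_bigcup_le (I : finType) (P : pred I) (F : I -> {set V}) :
  #|\bigcup_(i | P i) F i| <= \sum_(i | P i) #|F i|.
Proof.
apply: (big_ind2 (fun (A : {set V}) n => #|A| <= n)) => [|A1 n1 A2 n2 h1 h2|//].
  by rewrite cards0.
exact: leq_trans (leq_card_setU _ _) (leq_add h1 h2).
Qed.

Lemma card_nbhd_le a : #|[set j | e a j]| <= max_degree e.
Proof. by rewrite /max_degree (leq_bigmax a). Qed.

Lemma card_walk_ends n a : #|walk_ends n a| <= max_degree e ^ n.
Proof.
elim: n a => [|n IH] a /=; first by rewrite cards1.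
apply: leq_trans (card_bigcup_le _ _) _.
apply: (@leq_trans (\sum_(x | e a x) max_degree e ^ n)); first exact: leq_sum.
rewrite sum_nat_const expnS leq_mul2r; apply/orP; right.
by apply: leq_trans (card_nbhd_le a); rewrite cardsE.
Qed.

Lemma walk_ends_SS n a : symmetric e -> max_degree e <= 1 ->
  walk_ends n.+2 a \subset walk_ends n a.
Proof.
move=> sym deg1; apply/subsetP => j /bigcupP [x eax /bigcupP [y exy hj]].
have /card_le1_eqP nbhd1 := leq_trans (card_nbhd_le x) deg1.
by rewrite (nbhd1 y a) ?inE // sym.
Qed.

(* [gdist] only searches lengths below #|V|; a shortened path stays below that bound. *)
Lemma walk_gdist a b : connect e a b -> walk_of_length e (gdist e a b) a b.
Proof.
case/connectP => p p_path ->; case: (shortenP p_path) => p' p'_path p'_uniq _.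
have p'_lt : size p' < #|V|.
  by have := max_card (mem (a :: p')); rewrite (card_uniqP p'_uniq).
have walk_p' : walk_of_length e (size p') a (last a p').
  by apply/existsP; exists (in_tuple p'); rewrite /= p'_path eqxx.
have has_walk : has (fun n => walk_of_length e n a (last a p')) (iota 0 #|V|).
  by apply/hasP; exists (size p'); rewrite ?mem_iota.
have := has_walk; rewrite has_find size_iota => find_lt.
by have := nth_find 0 has_walk; rewrite nth_iota // add0n.
Qed.

Lemma gdist_lt_str_range (S : {set V}) a b :
  a \in S -> b \in S -> gdist e a b < str_range e S.
Proof.
move=> aS bS; rewrite /str_range ltnS.
exact: (bigop.bigmax_sup a aS (bigop.bigmax_sup b bS (leqnn _))).
Qed.

Lemma card_le2_of_max_degree_le1 :
  symmetric e -> connected_graph e -> max_degree e <= 1 -> #|V| <= 2.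
Proof.
move=> sym conn deg1; case: (pickP V) => [a _|V0]; last by rewrite eq_card0.
pose B := walk_ends 0 a :|: walk_ends 1 a.
have ends_in_B n : walk_ends n a \subset B.
  suff: walk_ends n a \subset B /\ walk_ends n.+1 a \subset B by case.
  elim: n => [|n [h0 h1]]; first by split; [apply: subsetUl | apply: subsetUr].
  by split => //; apply: subset_trans (walk_ends_SS n a sym deg1) h0.
have cover : [set: V] \subset B.
  apply/subsetP => b _; apply/(subsetP (ends_in_B (gdist e a b)))/walk_ends_of_walk.
  exact: walk_gdist.
have := subset_leq_card cover; rewrite cardsT => /leq_trans; apply.
have := card_walk_ends 0 a; have := card_walk_ends 1 a.
by rewrite expn0 expn1 => h1 h0; apply: leq_trans (leq_card_setU _ _) _; lia.
Qed.

Lemma exists_distant_pair Rg :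
  symmetric e -> connected_graph e -> 0 < Rg -> 2 < #|V| ->
  max_degree e ^ Rg <= #|V| ->
  exists a b, a != b /\ Rg <= gdist e a b.
Proof.
move=> sym conn Rg_gt0 V_gt2 ball_small.
case: (leqP (max_degree e) 1) => [deg1|deg2].
  by have := card_le2_of_max_degree_le1 sym conn deg1; lia.
case: (pickP V) => [a _|V0]; last by rewrite eq_card0 in V_gt2.
pose B := \bigcup_(n < Rg) walk_ends n a.
have card_B : #|B| < #|V|.
  apply: leq_ltn_trans (card_bigcup_le _ _) (leq_trans _ ball_small).
  apply: leq_ltn_trans (sum_expn_lt Rg deg2).
  by apply: leq_sum => n _; apply: card_walk_ends.
have [b bB] : {b | b \notin B}.
  case: (pickP (mem (~: B))) => [b|noC]; first by rewrite /= inE; exists b.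
  by have := cardsC B; rewrite (eq_card0 noC) addn0 => cardB; lia.
exists a, b; split.
  apply: contraNneq bB => <-; apply/bigcupP; exists (Ordinal Rg_gt0) => //.
  by rewrite inE.
rewrite leqNgt; apply: contra bB => lt_Rg; apply/bigcupP.
by exists (Ordinal lt_Rg) => //; apply: walk_ends_of_walk; apply: walk_gdist.
Qed.

End Walks.

Local Open Scope ring_scope.

Theorem theorem2 (R : realType) (V : finType) (e : rel V) (k Rg : nat)
    (H : state V R[i] -> state V R[i]) (E : nat -> R[i]) :
  simple_graph e -> connected_graph e ->
  (0 < k)%N -> (0 < Rg)%N ->
  (2 * k * ((max_degree e) ^ (4 * Rg) + 1) < #|V|)%N ->
  klocal_range e k Rg H ->
  (forall p : nat, (p <= #|V|)%N ->
     H (@Wstate R V p) = (fun x => E p * @Wstate R V p x)) ->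
  exists Omega omega : R[i],
    forall p : nat, (p <= #|V|)%N -> E p = Omega + omega * p%:R.
Proof.
move=> [sym _] conn k_gt0 Rg_gt0 V_large [c [c_local HE]] eigH.
have ball_small : (max_degree e ^ Rg <= #|V|)%N.
  have : (max_degree e ^ Rg <= max_degree e ^ (4 * Rg))%N.
    by case: (posnP (max_degree e)) => [->|D_gt0]; rewrite ?exp0n ?leq_pexp2l //; lia.
  by nia.
have V_gt2 : (2 < #|V|)%N by nia.
have [a [b [ab ab_far]]] := exists_distant_pair sym conn Rg_gt0 V_gt2 ball_small.
have c_apart J K : c J K != 0 -> ~~ ((a \in J :|: K) && (b \in J :|: K)).
  move=> /c_local [_ range_le]; apply/negP => /andP[aJK bJK].
  by have := leq_trans (gdist_lt_str_range e aJK bJK) range_le; rewrite ltnNge ab_far.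
exists (E 0%N), (E 1%N - E 0%N); apply: (@affine_of_second_difference _ E #|V|) => p hp.
have [z z_sub cardz] : exists2 z : {set V}, z \subset ~: [set a; b] & #|z| = p.
  by apply: subset_of_card; have := cardsC [set a; b]; rewrite cards2 ab; lia.
have [az bz] : a \notin z /\ b \notin z.
  by split; apply/negP => /(subsetP z_sub); rewrite !inE eqxx ?orbT.
have abz : a \notin b |: z by rewrite !inE negb_or ab az.
have := weight_response_additive z c_apart; rewrite !(weight_responseE HE eigH).
by rewrite !cardsU1 abz az bz cardz.
Qed.
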